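(* Let $n\ge 1$, $m=2$, $0\le k\le n-1$. There is a learning algorithm that, given $n$ and $k$, exactly identifies every complete acyclic $k$-bounded binary CP-net $N^*$ over $n$ variables using $O(n\mathcal{U}_k+e_{N^*}\log_2(n))$ membership queries over swap examples in $\mathcal{X}_{swap}$, where $e_{N^*}$ is the number of edges of $N^*$.
   Context: Variables $V=\{v_1,\dots,v_n\}$, each with a domain of size $2$. An outcome assigns a value to every variable; $\mathcal{O}_X$ denotes assignments to $X\subseteq V$. A complete CP-net specifies for each $v_i$ a parent set $Pa(v_i)\subseteq V\setminus\{v_i\}$ and, for each context $\gamma\in\mathcal{O}_{Pa(v_i)}$, a strict order $\succ^{v_i}_\gamma$ on $D_{v_i}$; parents are non-dummy. Acyclic: the graph with edges $(v_j,v_i)$, $v_j\in Pa(v_i)$, is acyclic; $k$-bounded: all $|Pa(v_i)|\le k$. Improving flip: changing only $v_i$ to the value preferred under $\succ^{v_i}_{o[Pa(v_i)]}$; $o'\succ o$ iff a nonempty sequence of improving flips leads from $o$ to $o'$. A swap is an ordered pair $x=(x.1,x.2)$ of outcomes differing in exactly one variable; $\mathcal{X}_{swap}$ contains exactly one of the two orderings of each such pair (fixed arbitrarily). A membership query for $x$ returns $1$ iff $x.1\succ x.2$ under the unknown target $N^*$ (answers always correct). $\mathcal{U}_k$ is the smallest size of a set $S\subseteq\{0,1\}^{n-1}$ whose projection onto every set of $k$ coordinates contains all $2^k$ binary vectors. *)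

From mathcomp Require Import all_boot.
Set Implicit Arguments. Unset Strict Implicit. Unset Printing Implicit Defensive.

Definition outcome (n : nat) := {ffun 'I_n -> bool}.

Definition flip n (o : outcome n) (i : 'I_n) : outcome n :=
  [ffun j => if j == i then ~~ o i else o j].

(* A complete binary CP-net: parent sets and, for each variable, its CPT.
   cpt i o = the preferred value of v_i in the context o[Pa(v_i)]
   (well-formedness below requires cpt i to depend only on o restricted to
   Pa(v_i), so this is the CPT indexed by contexts; on a 2-element domain a
   strict order is determined by its preferred value). *)
Record cpnet (n : nat) := CPNet {
  Pa : {ffun 'I_n -> {set 'I_n}};
  cpt : {ffun 'I_n -> {ffun outcome n -> bool}} }.

Definition parent_rel n (N : cpnet n) : rel 'I_n := fun j i => j \in Pa N i.

Definition valid_cpnet n (k : nat) (N : cpnet n) : Prop :=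
  (forall i : 'I_n, i \notin Pa N i) /\
  (forall (i : 'I_n) (o o' : outcome n),
      (forall j, j \in Pa N i -> o j = o' j) -> cpt N i o = cpt N i o') /\
  (forall (i j : 'I_n), j \in Pa N i ->
      exists o : outcome n, cpt N i o != cpt N i (flip o j)) /\
  (forall (i j : 'I_n), j \in Pa N i -> ~~ connect (parent_rel N) i j) /\
  (forall i : 'I_n, #|Pa N i| <= k).

Definition nedges n (N : cpnet n) : nat := \sum_(i : 'I_n) #|Pa N i|.

Definition impflip n (N : cpnet n) : rel (outcome n) :=
  fun o o' => [exists i : 'I_n, (o i != cpt N i o) && (o' == flip o i)].

Definition prefers n (N : cpnet n) (o' o : outcome n) : bool :=
  [exists o1, impflip N o o1 && connect (impflip N) o1 o'].

(* A swap is encoded by (o, i), standing for the ordered pair (o, flip o i).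
   An orientation sel picks exactly one of the two orderings of each swap pair:
   X_swap = { (o, flip o i) | sel o i }. *)
Definition swap_orientation n (sel : outcome n -> 'I_n -> bool) : Prop :=
  forall (o : outcome n) (i : 'I_n), sel (flip o i) i = ~~ sel o i.

Definition mquery n (N : cpnet n) (q : outcome n * 'I_n) : bool :=
  prefers N q.1 (flip q.1 q.2).

(* Adaptive (deterministic) query algorithms, as decision trees. *)
Inductive qtree (Q R : Type) : Type :=
| Leaf : R -> qtree Q R
| Ask : Q -> (bool -> qtree Q R) -> qtree Q R.

Fixpoint exec (Q R : Type) (ok ans : Q -> bool) (t : qtree Q R)
  : option (R * nat) :=
  match t with
  | Leaf r => Some (r, 0)
  | Ask q f =>
      if ok q then
        match exec ok ans (f (ans q)) with
        | Some (r, c) => Some (r, c.+1)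
        | None => None
        end
      else None
  end.

Definition kcover (n k : nat) (S : {set {ffun 'I_n.-1 -> bool}}) : bool :=
  [forall K : {set 'I_n.-1}, (#|K| == k) ==>
     [forall v : {ffun 'I_n.-1 -> bool},
        [exists s in S, [forall j in K, s j == v j]]]].

Lemma kcover_exists (n k : nat) :
  exists m, [exists S : {set {ffun 'I_n.-1 -> bool}}, kcover k S && (#|S| == m)].
Proof.
exists #|[set: {ffun 'I_n.-1 -> bool}]|; apply/existsP.
exists [set: {ffun 'I_n.-1 -> bool}]; rewrite eqxx andbT.
apply/forallP=> K; apply/implyP=> _; apply/forallP=> v; apply/existsP.
exists v; rewrite in_setT /=; apply/forallP=> j; apply/implyP=> _; exact: eqxx.
Qed.

Definition Ucov (n k : nat) : nat := ex_minn (kcover_exists n k).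

From mathcomp Require Import all_boot zify.
Set Implicit Arguments. Unset Strict Implicit. Unset Printing Implicit Defensive.

(* In an acyclic CP-net there is no cycle of improving flips (take a variable
   with fewest ancestors among those changed along the cycle: its parents stay
   fixed, so it can only move towards its preferred value and never returns).
   Hence a swap of v_i is preferred exactly when it is an improving flip, and
   either orientation of the swap reveals the preferred value of v_i in that
   context.  The learner treats each v_i separately.  It first asks this value
   for the U_k outcomes obtained from a k-covering set S, which realise every
   context of the at most k parents of v_i.  While its current set P of found
   parents is not all of Pa(v_i), some two of these outcomes agree on P but
   have different preferred values (parents are non-dummy); a binary search
   between them over the coordinates where they differ finds a new parent
   with at most up_log 2 n queries.  Once P = Pa(v_i), the answers already
   asked determine the CPT of v_i. *)

Section QueryTrees.
Variable Q : Type.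

Fixpoint qbind A B (t : qtree Q A) (f : A -> qtree Q B) : qtree Q B :=
  match t with
  | Leaf a => f a
  | Ask q g => Ask q (fun b => qbind (g b) f)
  end.

Fixpoint qmap A B (f : A -> qtree Q B) (l : seq A) : qtree Q (seq B) :=
  if l is a :: l' then
    qbind (f a) (fun b => qbind (qmap f l') (fun bs => Leaf _ (b :: bs)))
  else Leaf _ [::].

Variables ok ans : Q -> bool.

Lemma exec_qbind A B (t : qtree Q A) (f : A -> qtree Q B) a b c c' :
  exec ok ans t = Some (a, c) -> exec ok ans (f a) = Some (b, c') ->
  exec ok ans (qbind t f) = Some (b, c + c').
Proof.
elim: t c => [a0 c [-> <-] //|q g IH c /=].
case: (ok q) => //; case E: (exec ok ans (g (ans q))) => [[a1 c1]|] // [ea <-] fa.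
by subst a1; rewrite (IH _ _ E fa) addSn.
Qed.

Lemma exec_qmap A B (f : A -> qtree Q B) (g : A -> B) (w : A -> nat) :
  (forall a, exists2 c, exec ok ans (f a) = Some (g a, c) & c <= w a) ->
  forall l, exists2 c, exec ok ans (qmap f l) = Some (map g l, c)
                     & c <= \sum_(a <- l) w a.
Proof.
move=> fP; elim=> [|a l [c2 r2 le2]]; first by exists 0; rewrite ?big_nil.
have [c1 r1 le1] := fP a.
exists (c1 + (c2 + 0)); last by rewrite big_cons addn0 leq_add.
exact: exec_qbind r1 (exec_qbind r2 _).
Qed.

End QueryTrees.

Lemma subset_extend (T : finType) (A : {set T}) k :
  #|A| <= k <= #|T| -> exists2 K : {set T}, A \subset K & #|K| = k.
Proof.
case/andP=> leAk lekT.
have /card_geqP [s [us size_s sAc]] : k - #|A| <= #|~: A| by have := cardsC A; lia.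
have disjAs : [disjoint A & [set x in s]].
  by rewrite disjoint_sym disjoints_subset; apply/subsetP => x; rewrite inE => /sAc.
exists (A :|: [set x in s]); first exact: subsetUl.
move/eqP: (leq_card_setU A [set x in s]).2; rewrite disjAs => ->.
by rewrite cardsE (card_uniqP us) size_s; lia.
Qed.

Lemma half_leq_pow2 d m : d <= 2 ^ m.+1 -> d./2 <= 2 ^ m /\ d - d./2 <= 2 ^ m.
Proof.
rewrite expnS -(odd_double_half d) -muln2.
by have := leq_b1 (odd d); split; lia.
Qed.

Lemma up_log2_leq_double_trunc_log n : up_log 2 n <= 2 * trunc_log 2 n.
Proof.
have [le_n1|lt1n] := leqP n 1; first by move: (up_log_eq0 2 n); rewrite le_n1 orbT => /eqP ->.
rewrite up_log_trunc_log //.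
have := leq_trunc_log 2 (leq_pred n).
have : 0 < trunc_log 2 n by rewrite trunc_log_gt0.
lia.
Qed.

Lemma connect_to_last (T : finType) (e : rel T) a p :
  path e a p -> {in a :: p, forall w, connect e w (last a p)}.
Proof.
elim: p a => [|b p IH] a /=; first by move=> _ w; rewrite inE => /eqP ->.
case/andP=> eab pb w; rewrite inE => /predU1P [->|wp]; last exact: IH.
exact: connect_trans (connect1 eab) (IH b pb b (mem_head _ _)).
Qed.

Section ImprovingFlips.
Variables (n : nat) (N : cpnet n).

Definition ancestors (v : 'I_n) := [set u | connect (parent_rel N) u v].

Lemma impflip_path_keeps_pref v c a p :
  path (impflip N) a p -> {in a :: p, forall z, cpt N v z = c} ->
  a v = c -> last a p v = c.
Proof.
elim: p a => [//|b p IH] a /= /andP [/existsP [u /andP [au /eqP ->]] pb] cst av.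
apply: IH => [//|z zp|]; first by apply: cst; rewrite inE zp orbT.
rewrite ffunE; case: eqP => [vu|//]; subst u.
by move: au; rewrite cst ?mem_head // av eqxx.
Qed.

Variable k : nat.
Hypothesis HN : valid_cpnet k N.

Lemma notin_Pa i : i \notin Pa N i.
Proof. by case: HN. Qed.

Lemma cpt_agree i (o o' : outcome n) :
  {in Pa N i, forall j, o j = o' j} -> cpt N i o = cpt N i o'.
Proof. by case: HN => _ [cptP _]; apply: cptP. Qed.

Lemma cpt_flip i (o : outcome n) : cpt N i (flip o i) = cpt N i o.
Proof.
apply: cpt_agree => j jP; rewrite ffunE; case: eqP => // ji.
by move: jP; rewrite ji (negbTE (notin_Pa i)).
Qed.

Lemma cpt_neq_Pa i (o o' : outcome n) :
  cpt N i o != cpt N i o' -> exists2 j, j \in Pa N i & o j != o' j.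
Proof.
move=> neq; apply/exists_inP; apply: contraNT neq => /exists_inPn agree.
by apply/eqP/cpt_agree => j /agree /negPn /eqP.
Qed.

Lemma card_ancestors_Pa v j : j \in Pa N v -> #|ancestors j| < #|ancestors v|.
Proof.
move=> jP; apply: proper_card; apply/properP; split.
  apply/subsetP => u; rewrite !inE => uj.
  exact: connect_trans uj (connect1 jP).
exists v; rewrite !inE ?connect0 //.
by case: HN => _ [_ [_ [acyclic _]]]; apply: acyclic.
Qed.

Lemma impflip_acyclic x y : impflip N x y -> ~~ connect (impflip N) y x.
Proof.
move=> xy; apply/negP => yx.
pose cyc z := connect (impflip N) x z && connect (impflip N) z x.
pose F := [set u | [exists z, cyc z && (z u != x u)]].
have [i iF] : exists i, i \in F.
  case/existsP: (xy) => i /andP [_ /eqP ey]; exists i.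
  rewrite inE; apply/existsP; exists y.
  by rewrite /cyc (connect1 xy) yx ey ffunE eqxx; case: (x i).
have [v vF vmin] := arg_minnP (fun v => #|ancestors v|) iF.
have cpt_cyc z : cyc z -> cpt N v z = cpt N v x.
  move=> cz; apply: cpt_agree => j jP; apply/eqP; apply: contraT => zj.
  have jF : j \in F by rewrite inE; apply/existsP; exists z; rewrite cz.
  by have := vmin j jF; rewrite leqNgt card_ancestors_Pa.
have stays a b : cyc a -> cyc b -> connect (impflip N) a b ->
    a v = cpt N v x -> b v = cpt N v x.
  case/andP=> xa _ /andP [_ bx] /connectP [p pa eb]; subst b.
  apply: (impflip_path_keeps_pref pa) => w wp; apply: cpt_cyc; apply/andP; split.
    exact: connect_trans xa (path_connect pa wp).
  exact: connect_trans (connect_to_last pa wp) bx.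
have cyc_x : cyc x by rewrite /cyc connect0.
have /[!inE] /existsP [z /andP [cz zx]] : v \in F := vF.
have [xv|xv] := eqVneq (x v) (cpt N v x).
  by move: zx; rewrite (stays x z) ?xv ?eqxx //; case/andP: cz.
have zv : z v = cpt N v x by move: zx xv; case: (z v) (x v) (cpt N v x) => [] [] [].
by move: xv; rewrite (stays z x) ?eqxx //; case/andP: cz.
Qed.

Lemma mquery_swap (o : outcome n) i : mquery N (o, i) = (o i == cpt N i o).
Proof.
rewrite /mquery /prefers /=; have [pref|npref] := eqVneq (o i) (cpt N i o).
  apply/existsP; exists o; rewrite connect0 andbT.
  apply/existsP; exists i; rewrite cpt_flip ffunE eqxx -pref.
  apply/andP; split; first by case: (o i).
  by apply/eqP/ffunP => j; rewrite !ffunE; case: eqP => [->|//]; rewrite eqxx negbK.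
apply/existsP => [[o1 /andP [oo1 o1o]]].
have oi : impflip N o (flip o i) by apply/existsP; exists i; rewrite npref eqxx.
by move/negP: (impflip_acyclic oi); apply; apply: connect_trans (connect1 oo1) o1o.
Qed.

End ImprovingFlips.

Section Learner.
Variables (n : nat) (sel : outcome n -> 'I_n -> bool).
Variable S : {set {ffun 'I_n.-1 -> bool}}.
Local Notation qt := (qtree (outcome n * 'I_n)).

Definition oriented (o : outcome n) i := if sel o i then o else flip o i.

(* The query (oriented o i, i) lies in X_swap, and by [mquery_swap] its answer
   tells whether oriented o i has the value cpt N i o at v_i. *)
Definition ask_pref (o : outcome n) i : qt bool :=
  Ask (oriented o i, i) (fun a => Leaf _ (a == oriented o i i)).

Definition pref_table i (l : seq (outcome n)) : qt (seq (outcome n * bool)) :=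
  qmap (fun o => qbind (ask_pref o i) (fun b => Leaf _ (o, b))) l.

Definition agree (P : {set 'I_n}) (x y : outcome n) := [forall j in P, x j == y j].

Definition conflicts P (tb : seq (outcome n * bool)) :=
  [seq ab <- [seq (a, b) | a <- tb, b <- tb] |
     agree P ab.1.1 ab.2.1 && (ab.1.2 != ab.2.2)].

Definition splice (x y : outcome n) (D : seq 'I_n) : outcome n :=
  [ffun j => if j \in D then y j else x j].

Fixpoint search_parent i m (x : outcome n) bx (y : outcome n) D : qt 'I_n :=
  if m is m'.+1 then
    let z := splice x y (take (size D)./2 D) in
    qbind (ask_pref z i) (fun bz =>
      if bz == bx then search_parent i m' z bx y (drop (size D)./2 D)
      else search_parent i m' x bx z (take (size D)./2 D))
  else Leaf _ (head i D).

Lemma search_parentS i m x bx y D :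
  let z := splice x y (take (size D)./2 D) in
  search_parent i m.+1 x bx y D =
  qbind (ask_pref z i) (fun bz =>
    if bz == bx then search_parent i m z bx y (drop (size D)./2 D)
    else search_parent i m x bx z (take (size D)./2 D)).
Proof. by []. Qed.

Fixpoint grow_parents i tb f (P : {set 'I_n}) : qt {set 'I_n} :=
  if f is f'.+1 then
    if conflicts P tb is ((x, bx), (y, _)) :: _ then
      qbind (search_parent i (up_log 2 n) x bx y [seq j <- enum 'I_n | x j != y j])
            (fun j => grow_parents i tb f' (j |: P))
    else Leaf _ P
  else Leaf _ P.

Definition lift_outcome i (s : {ffun 'I_n.-1 -> bool}) : outcome n :=
  [ffun j => if unlift i j is Some j' then s j' else false].

Definition cover_outcomes i := [seq lift_outcome i s | s <- enum S].

Definition lookup_pref P (tb : seq (outcome n * bool)) (o : outcome n) :=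
  (nth (o, false) tb (find (fun p => agree P p.1 o) tb)).2.

Definition learn_var i : qt ({set 'I_n} * {ffun outcome n -> bool}) :=
  qbind (pref_table i (cover_outcomes i)) (fun tb =>
  qbind (grow_parents i tb n set0) (fun P =>
  Leaf _ (P, [ffun o => lookup_pref P tb o]))).

Definition learn_cpnet : qt (cpnet n) :=
  qbind (qmap learn_var (enum 'I_n)) (fun res =>
  let get (i : 'I_n) := nth (set0, [ffun _ => false]) res i in
  Leaf _ (CPNet [ffun i => (get i).1] [ffun i => (get i).2])).

End Learner.

Section LearnerCorrect.
Variables (n k : nat) (sel : outcome n -> 'I_n -> bool) (N : cpnet n).
Variable S : {set {ffun 'I_n.-1 -> bool}}.
Hypotheses (Hsel : swap_orientation sel) (HN : valid_cpnet k N).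
Hypotheses (HS : kcover k S) (Hk : k <= n.-1).
Local Notation runs t r c := (exec (fun q => sel q.1 q.2) (mquery N) t = Some (r, c)).

Lemma ask_pref_spec o i : runs (ask_pref sel o i) (cpt N i o) 1.
Proof.
have sel_oriented : sel (oriented sel o i) i.
  by rewrite /oriented; case: ifP => // /negbT; rewrite Hsel.
have cpt_oriented : cpt N i (oriented sel o i) = cpt N i o.
  by rewrite /oriented; case: ifP => // _; rewrite (cpt_flip HN).
rewrite /= sel_oriented (mquery_swap HN) cpt_oriented.
by case: (oriented sel o i i); case: (cpt N i o).
Qed.

Lemma pref_table_spec i l :
  exists2 c, runs (pref_table sel i l) [seq (o, cpt N i o) | o <- l] c & c <= size l.
Proof.
rewrite -sum1_size; apply: exec_qmap => o; exists (1 + 0) => //.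
exact: exec_qbind (ask_pref_spec o i) _.
Qed.

Lemma search_parent_spec i m x y D :
  cpt N i x != cpt N i y -> {in [predC D], forall j, x j = y j} -> size D <= 2 ^ m ->
  exists j c, [/\ runs (search_parent sel i m x (cpt N i x) y D) j c, c <= m,
                  j \in D & j \in Pa N i].
Proof.
elim: m x y D => [|m IH] x y D cxy xyD sizeD.
  have [j jP xyj] := cpt_neq_Pa HN cxy.
  have jD : j \in D by apply: contraR xyj => jD; rewrite xyD.
  have headD : head i D = j.
    by case: D {xyD} sizeD jD => [|j' [|]] //= _; rewrite inE => /eqP ->.
  by exists j, 0; rewrite /= headD.
have [size_l size_r] := half_leq_pow2 sizeD.
rewrite search_parentS.
set D1 := take (size D)./2 D; set D2 := drop (size D)./2 D; set z := splice x y D1.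
have eD : D = D1 ++ D2 by rewrite cat_take_drop.
have [czx|czx] := eqVneq (cpt N i z) (cpt N i x).
  have [|||j [c [run le_cm jD2 jP]]] := IH z y D2.
  - by rewrite czx.
  - move=> j; rewrite !inE /z ffunE; case: ifP => // jD1 jD2.
    by apply: xyD; rewrite !inE eD mem_cat jD1.
  - by rewrite size_drop.
  exists j, c.+1; split => //; last by rewrite eD mem_cat jD2 orbT.
  by rewrite -[c.+1]add1n; apply: (exec_qbind (ask_pref_spec z i)); rewrite czx eqxx -czx.
have [|||j [c [run le_cm jD1 jP]]] := IH x z D1.
- by rewrite eq_sym.
- by move=> j; rewrite !inE /z ffunE => /negbTE ->.
- by rewrite size_take_min geq_min size_l.
exists j, c.+1; split => //; last by rewrite eD mem_cat jD1.
by rewrite -[c.+1]add1n; apply: (exec_qbind (ask_pref_spec z i)); rewrite (negbTE czx).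
Qed.

Definition table i := [seq (o, cpt N i o) | o <- cover_outcomes S i].

Lemma mem_table i o b : (o, b) \in table i -> b = cpt N i o.
Proof. by case/mapP => o' _ [-> ->]. Qed.

Lemma table_covers i o :
  exists2 o', (o', cpt N i o') \in table i & {in Pa N i, forall j, o' j = o j}.
Proof.
pose A := [set j' | lift i j' \in Pa N i].
have cardA : #|A| <= k.
  rewrite -(card_imset _ (@lift_inj _ i)); case: HN => _ [_ [_ [_ /(_ i) cardPa]]].
  apply: (leq_trans _ cardPa); apply: subset_leq_card; apply/subsetP => _ /imsetP [j' + ->].
  by rewrite inE.
have [K AK /eqP cardK] : exists2 K : {set 'I_n.-1}, A \subset K & #|K| = k.
  by apply: subset_extend; rewrite cardA card_ord.
move/forallP: HS => /(_ K) /implyP /(_ cardK) /forallP /(_ [ffun j' => o (lift i j')]).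
case/exists_inP => s sS /forall_inP sK.
exists (lift_outcome i s); first by apply/map_f/map_f; rewrite mem_enum.
move=> j jP; rewrite ffunE; case: unliftP => [j' ej|ej]; last first.
  by move: jP; rewrite ej (negbTE (notin_Pa HN i)).
have j'A : j' \in A by rewrite inE -ej.
by move/eqP: (sK j' (subsetP AK j' j'A)); rewrite ffunE -ej.
Qed.

Lemma conflicts_table i (P : {set 'I_n}) x bx y by_ :
  ((x, bx), (y, by_)) \in conflicts P (table i) ->
  [/\ bx = cpt N i x, by_ = cpt N i y, agree P x y & cpt N i x != cpt N i y].
Proof.
rewrite mem_filter /= => /andP [/andP [agP neq] /allpairsP [[p1 p2] [p1T p2T /= [e1 e2]]]].
move: p1T p2T; rewrite -e1 -e2 => /mem_table ebx /mem_table eby.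
by rewrite -ebx -eby.
Qed.

Lemma conflicts_Pa i (P : {set 'I_n}) j : P \subset Pa N i -> j \in Pa N i -> j \notin P ->
  conflicts P (table i) != [::].
Proof.
move=> sPa jPa jP.
have [o dummy] : exists o, cpt N i o != cpt N i (flip o j).
  by case: HN => _ [_ [nondummy _]]; apply: nondummy.
have [o1 o1T o1o] := table_covers i o.
have [o2 o2T o2o] := table_covers i (flip o j).
rewrite (cpt_agree HN o1o) (cpt_agree HN o2o) in o1T o2T.
apply/eqP => noconf.
suff : ((o1, cpt N i o), (o2, cpt N i (flip o j))) \in conflicts P (table i).
  by rewrite noconf.
rewrite mem_filter /= dummy andbT allpairs_f // andbT.
apply/forall_inP => u uP; rewrite o1o ?o2o ?(subsetP sPa) // ffunE.
by case: (u =P j) => // euj; move: jP; rewrite -euj uP.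
Qed.

Lemma grow_parents_spec i f (P : {set 'I_n}) :
  P \subset Pa N i -> #|Pa N i| - #|P| < f ->
  exists2 c, runs (grow_parents sel i (table i) f P) (Pa N i) c
           & c <= (#|Pa N i| - #|P|) * up_log 2 n.
Proof.
elim: f P => [//|f IH] P sPa fuel /=.
case E: (conflicts P (table i)) => [|[[x bx] [y by_]] tb'].
  exists 0 => //; congr (Some (_, _)); apply/eqP; rewrite eqEsubset sPa /=.
  apply/subsetP => j jPa; apply: contraT => jP.
  by move: (conflicts_Pa sPa jPa jP); rewrite E.
have [-> _ agP cxy] : [/\ bx = cpt N i x, by_ = cpt N i y, agree P x y
                         & cpt N i x != cpt N i y].
  by apply: conflicts_table; rewrite E mem_head.
pose D := [seq j <- enum 'I_n | x j != y j].
have [||j [c1 [run1 le1 jD jPa]]] := @search_parent_spec i (up_log 2 n) x y D cxy.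
- by move=> j; rewrite !inE mem_filter mem_enum andbT negbK => /eqP.
- apply: leq_trans (up_logP n (isT : 1 < 2)).
  by rewrite size_filter (leq_trans (count_size _ _)) ?size_enum_ord.
have jP : j \notin P.
  apply: contraL jD => jP; rewrite mem_filter negb_and negbK.
  by move/forall_inP: agP => ->.
have ltP : #|P| < #|Pa N i| by apply/proper_card/properP; split => //; exists j.
have [||c2 run2 le2] := IH (j |: P).
- by apply/subUsetP; rewrite sub1set.
- by rewrite cardsU1 jP add1n; lia.
exists (c1 + c2); first exact: exec_qbind run1 run2.
have -> : #|Pa N i| - #|P| = (#|Pa N i| - #|j |: P|).+1.
  by rewrite cardsU1 jP add1n subnSK.
by rewrite mulSn leq_add.
Qed.

Lemma lookup_pref_table i o : lookup_pref (Pa N i) (table i) o = cpt N i o.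
Proof.
pose a (p : outcome n * bool) := agree (Pa N i) p.1 o.
have [o' o'T o'o] := table_covers i o.
have hasT : has a (table i).
  by apply/hasP; exists (o', cpt N i o') => //; apply/forall_inP => j /o'o ->.
have := nth_find (o, false) hasT; rewrite has_find in hasT.
have := mem_nth (o, false) hasT; rewrite /lookup_pref -/a.
case: nth => o1 b /mem_table -> /forall_inP agP /=.
by apply: (cpt_agree HN) => j /agP /eqP.
Qed.

Lemma learn_var_spec i :
  exists2 c, runs (learn_var sel S i) (Pa N i, cpt N i) c
           & c <= #|S| + #|Pa N i| * up_log 2 n.
Proof.
have [c1 run1 le1] := pref_table_spec i (cover_outcomes S i).
have fuel : #|Pa N i| - #|(set0 : {set 'I_n})| < n.
  have : Pa N i \proper [set: 'I_n].
    by rewrite properT; apply: contraNneq (notin_Pa HN i) => ->; rewrite inE.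
  by move/proper_card; rewrite cards0 subn0 cardsT card_ord.
have [c2 run2 le2] := grow_parents_spec (sub0set _) fuel.
exists (c1 + (c2 + 0)).
  apply: exec_qbind run1 (exec_qbind run2 _); congr (Some ((_, _), _)).
  by apply/ffunP => o; rewrite ffunE lookup_pref_table.
rewrite addn0 leq_add //; first by rewrite cardE -(size_map (lift_outcome i)).
by rewrite cards0 subn0 in le2.
Qed.

Lemma learn_cpnet_spec :
  exists2 c, runs (learn_cpnet sel S) N c & c <= n * #|S| + nedges N * up_log 2 n.
Proof.
have [c run le_c] := exec_qmap learn_var_spec (enum 'I_n).
exists (c + 0).
  apply: exec_qbind run _; congr (Some (_, _)).
  have -> : N = CPNet (Pa N) (cpt N) by case: (N).
  by congr CPNet; apply/ffunP => i; rewrite ffunE (nth_map i) ?size_enum_ord ?nth_ord_enum.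
move: le_c; rewrite addn0 big_split /= big_enum sum_nat_const card_ord.
by rewrite -big_distrl /= big_enum.
Qed.

End LearnerCorrect.

Theorem theorem8 :
  exists C : nat, forall n k : nat, 1 <= n -> k <= n.-1 ->
  forall sel : outcome n -> 'I_n -> bool, swap_orientation sel ->
  exists t : qtree (outcome n * 'I_n) (cpnet n),
  forall N : cpnet n, valid_cpnet k N ->
  exists c : nat,
    exec (fun q => sel q.1 q.2) (mquery N) t = Some (N, c) /\
    c <= C * (n * Ucov n k + nedges N * trunc_log 2 n).
Proof.
exists 2 => n k _ le_k sel Hsel.
rewrite /Ucov; case: ex_minnP => _ /existsP [S /andP [HS /eqP <-]] _.
exists (learn_cpnet sel S) => N HN.
have [c run le_c] := learn_cpnet_spec Hsel HN HS le_k.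
exists c; split => //.
have := up_log2_leq_double_trunc_log n; nia.
Qed.
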